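(* Let $n$ be an odd positive integer and let $\mathrm{Dic}_n=\langle x,y\mid x^{2n}=1,\ y^2=x^n,\ y^{-1}xy=x^{-1}\rangle$ be the dicyclic group of order $4n$, whose irreducible complex characters are $\chi_0,\chi_1,\chi_2,\chi_3,\psi_1,\ldots,\psi_{n-1}$ as described in the context. Let $C\subset\mathrm{Dic}_n$ be a nonempty subset that is a Delsarte $T$-design for $T=T(C)$ in the conjugacy class scheme of $\mathrm{Dic}_n$. Then $\chi_2\in T$ if and only if $\chi_3\in T$; and for each $1\le \ell\le n-1$ and each integer $k$ with $-n<k<n$ and $\gcd(k,2n)=1$, $\psi_\ell\in T$ if and only if $\psi_{|k\ell\ \mathrm{MOD}\ 2n|}\in T$.
   Context: Every element of $\mathrm{Dic}_n$ is uniquely $x^k$ or $yx^k$ with $0\le k<2n$. The irreducible characters (for $n$ odd) are: $\chi_0\equiv1$; $\chi_1(x^k)=1$, $\chi_1(yx^k)=-1$; $\chi_2(x^k)=(-1)^k$, $\chi_2(yx^{k})=i$ for $k$ even and $-i$ for $k$ odd; $\chi_3=\overline{\chi_2}$; and for $1\le r\le n-1$, $\psi_r(x^k)=2\cos(\pi rk/n)$, $\psi_r(yx^k)=0$. For an irreducible character $\chi$ of a finite group $G$, the corresponding primitive idempotent of the conjugacy class association scheme is the matrix $E_\chi\in\mathrm{Mat}_G(\mathbb{C})$ with $(g,h)$-entry $\frac{\chi(1)}{|G|}\overline{\chi(g^{-1}h)}$. For a nonempty $C\subseteq G$ with $0/1$ characteristic vector $\mathbf{x}$, $T(C)$ is the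 set of irreducible characters $\chi$ with $E_\chi\mathbf{x}=0$, and $C$ is a Delsarte $T$-design if $E_\chi\mathbf{x}=0$ for all $\chi\in T$. For integers $k$ and $m>1$, $k\ \mathrm{MOD}\ m$ denotes the unique $k'\equiv k\pmod m$ with $-m/2<k'\le m/2$. *)

From HB Require Import structures.
From mathcomp Require Import all_boot all_order all_algebra.
From mathcomp Require Import reals trigo.
From mathcomp Require Import complex.
Set Implicit Arguments. Unset Strict Implicit. Unset Printing Implicit Defensive.
Import Order.TTheory GRing.Theory Num.Theory.
Local Open Scope ring_scope.

(* Elements of Dic_n in normal form: (false, k) = x^k, (true, k) = y x^k,
   with k taken modulo 2n (the type 'Z_(2n) is Z/2nZ as soon as n >= 1). *)
Definition Dic (n : nat) : finType := (bool * 'Z_(n.*2))%type.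

Definition dic_mul (n : nat) (g h : Dic n) : Dic n :=
  match g, h with
  | (false, a), (false, b) => (false, a + b)
  | (false, a), (true, b)  => (true, b - a)           (* x^a y x^b = y x^(b-a) *)
  | (true, a),  (false, b) => (true, a + b)
  | (true, a),  (true, b)  => (false, n%:R + b - a)   (* y x^a y x^b = x^(n+b-a) *)
  end.

Definition dic_inv (n : nat) (g : Dic n) : Dic n :=
  match g with
  | (false, k) => (false, - k)
  | (true, k)  => (true, k + n%:R)                     (* (y x^k)^-1 = y x^(k+n) *)
  end.

Definition dic_one (n : nat) : Dic n := (false, 0).

Inductive irr_idx : Type := Chi0 | Chi1 | Chi2 | Chi3 | Psi of nat.

Definition dic_char (R : realType) (n : nat) (i : irr_idx) (g : Dic n) : R[i] :=
  let k := val g.2 in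
  match i with
  | Chi0 => 1
  | Chi1 => if g.1 then -1 else 1
  | Chi2 => if g.1 then (if ~~ odd k then 'i else - 'i) else (-1) ^+ k
  | Chi3 => ((if g.1 then (if ~~ odd k then 'i else - 'i) else (-1) ^+ k))^*
  | Psi r => if g.1 then 0
             else Complex (2 * cos (pi * (r * k)%:R / n%:R) : R) 0
  end.

(* (g,h)-entry of the primitive idempotent E_chi. *)
Definition idemE (R : realType) (n : nat) (i : irr_idx) (g h : Dic n) : R[i] :=
  dic_char R i (dic_one n) / #|{: Dic n}|%:R
  * (dic_char R i (dic_mul (dic_inv g) h))^*.

Definition charvec (R : realType) (n : nat) (C : {set Dic n}) (h : Dic n) : R[i] :=
  if h \in C then 1 else 0.

Definition inT (R : realType) (n : nat) (C : {set Dic n}) (i : irr_idx) : Prop :=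
  forall g : Dic n, \sum_(h : Dic n) idemE R i g h * charvec R C h = 0.

Definition delsarte_design (R : realType) (n : nat) (C : {set Dic n})
  (T : irr_idx -> Prop) : Prop :=
  forall i, T i -> forall g : Dic n, \sum_(h : Dic n) idemE R i g h * charvec R C h = 0.

(* k MOD m: the unique k' = k (mod m) with -m/2 < k' <= m/2. *)
Definition zMOD (k : int) (m : nat) : int :=
  let r := (k %% m%:Z)%Z in
  if (2 * r <= m%:Z) then r else r - m%:Z.

From HB Require Import structures.
From mathcomp Require Import all_boot all_order all_algebra all_field.
From mathcomp Require Import reals trigo.
From mathcomp Require Import complex.
Set Implicit Arguments. Unset Strict Implicit. Unset Printing Implicit Defensive.
Import Order.TTheory GRing.Theory Num.Theory.
Local Open Scope ring_scope.

(* chi_3 is the complex conjugate of chi_2 and the characteristic vector x of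
   C is real, so E_{chi_3} x is the conjugate of E_{chi_2} x.
   For psi_r let zeta = exp(i pi / n), a primitive 2n-th root of unity, and
   u = zeta^r.  The entry of E_{psi_r} x at y^s x^a is proportional to
   u^-a S_s(u) + u^a S_s(u^-1), where S_s(u) is the sum of u^b over the
   y^s x^b in C; taking a = 0, 1 shows that psi_r lies in T(C) iff
   S_0(u) = S_1(u) = 0 (as u^2 <> 1 when n does not divide r).  Now
   S_s(zeta^r) = 0 says that zeta is a root of the rational polynomial
   S_s(X^r); since the cyclotomic polynomial Phi_2n is irreducible over Q,
   this only depends on the Galois orbit of zeta, so r may be replaced by kr
   for any k coprime to 2n.  Finally psi_r only depends on +-r modulo 2n. *)

Definition ratCyclotomic d : {poly rat} := map_poly intr 'Phi_d.

Lemma map_ratCyclotomic (K : numFieldType) d :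
  map_poly ratr (ratCyclotomic d) = map_poly (intr : int -> K) 'Phi_d.
Proof. by rewrite -map_poly_comp; apply: eq_map_poly => z /=; rewrite ratr_int. Qed.

Lemma ratCyclotomic_irreducible d : (0 < d)%N -> irreducible_poly (ratCyclotomic d).
Proof.
move=> d_gt0; split.
  by rewrite size_map_inj_poly ?size_Cyclotomic ?ltnS ?totient_gt0 //; apply: intr_inj.
move=> q q_size q_dvd; rewrite /eqp q_dvd /=.
have [x qx] : exists x, root (map_poly (ratr : rat -> algC) q) x.
  by apply/closed_rootP; rewrite size_map_poly.
have x_prim : d.-primitive_root x.
  have [z z_prim] := C_prim_root_exists d_gt0.
  rewrite -(root_cyclotomic z_prim) -(Cintr_Cyclotomic z_prim) -map_ratCyclotomic.
  by apply: root_dvdp qx; rewrite dvdp_map.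
have [p [Dp _] p_min] := minCpolyP x.
suff -> : ratCyclotomic d = p by rewrite -p_min.
apply: (@map_inj_poly _ _ (ratr : rat -> algC)); [exact: fmorph_inj | exact: rmorph0 |].
by rewrite -Dp (minCpoly_cyclotomic x_prim) map_ratCyclotomic (Cintr_Cyclotomic x_prim).
Qed.

Lemma root_Cyclotomic_expr (K : idomainType) e (w : K) : (0 < e)%N ->
  root (map_poly intr 'Phi_e) w -> w ^+ e = 1.
Proof.
move=> e_gt0 /eqP Phi_w.
have := congr1 (fun p => (map_poly (intr : int -> K) p).[w]) (prod_Cyclotomic e_gt0).
rewrite (big_rem e) -?dvdn_divisors // rmorphM hornerM Phi_w mul0r.
rewrite rmorphB rmorph1 /= map_polyXn !hornerE.
by move/eqP; rewrite eq_sym subr_eq0 => /eqP.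
Qed.

Lemma root_Cyclotomic (K : idomainType) d (w : K) : d.-primitive_root w ->
  root (map_poly intr 'Phi_d) w.
Proof.
move=> w_prim; have d_gt0 := prim_order_gt0 w_prim.
have := congr1 (fun p => (map_poly (intr : int -> K) p).[w]) (prod_Cyclotomic d_gt0).
rewrite rmorph_prod horner_prod rmorphB rmorph1 /= map_polyXn !hornerE.
rewrite (prim_expr_order w_prim) subrr => /eqP; rewrite prodf_seq_eq0 => /hasP[e].
rewrite -dvdn_divisors // => e_dvd /= Phi_e_w.
suff -> : d = e by [].
have e_gt0 := dvdn_gt0 d_gt0 e_dvd.
apply/eqP; rewrite eqn_dvd e_dvd (prim_order_dvd w_prim).
by rewrite (root_Cyclotomic_expr e_gt0 Phi_e_w) eqxx.
Qed.

Lemma root_ratr_prim (K : numFieldType) d (w : K) (P : {poly rat}) :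
  d.-primitive_root w -> root (map_poly ratr P) w = (ratCyclotomic d %| P).
Proof.
move=> w_prim; have Phi_w := root_Cyclotomic w_prim.
apply/idP/idP => [P_w | /dvdpP[q ->]]; last first.
  by rewrite rmorphM rootM /= map_ratCyclotomic Phi_w orbT.
have Phi_irr := ratCyclotomic_irreducible (prim_order_gt0 w_prim).
apply: contraLR P_w; rewrite -(irreducible_poly_coprime _ Phi_irr).
rewrite -(coprimep_map (ratr : {rmorphism rat -> K})) map_ratCyclotomic.
by move/coprimep_root; apply.
Qed.

Lemma root_ratr_prim_exp_coprime (K : numFieldType) d (w : K) (P : {poly rat}) k r :
  d.-primitive_root w -> coprime k d ->
  root (map_poly ratr P) (w ^+ k ^+ r) = root (map_poly ratr P) (w ^+ r).
Proof.
move=> w_prim k_cop.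
have wk_prim : d.-primitive_root (w ^+ k) by rewrite prim_root_exp_coprime.
have root_comp (v : K) :
    root (map_poly ratr P) (v ^+ r) = root (map_poly ratr (P \Po 'X^r)) v.
  by rewrite /root map_comp_poly horner_comp map_polyXn hornerXn.
by rewrite !root_comp (root_ratr_prim _ wk_prim) (root_ratr_prim _ w_prim).
Qed.

Lemma expr_ZpB (F : fieldType) m (u : F) (a b : 'Z_m) : (1 < m)%N -> u ^+ m = 1 ->
  u ^+ val (b - a) = u ^+ val b / u ^+ val a.
Proof.
move=> m_gt1 um1; have um1' : u ^+ (Zp_trunc m).+2 = 1 by rewrite Zp_cast.
have u_neq0 : u != 0.
  by apply: contra_eq_neq um1 => ->; rewrite expr0n -(subnKC m_gt1) eq_sym oner_eq0.
have -> : val b = ((val (b - a)%R + val a) %% (Zp_trunc m).+2)%N.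
  by rewrite -[in LHS](subrK a b).
by rewrite expr_mod // exprD mulfK // expf_neq0.
Qed.

Section Zeta.
Variables (R : realType) (n : nat).

Definition zeta : R[i] := Complex (cos (pi / n%:R)) (sin (pi / n%:R)).

Lemma zetaX m :
  zeta ^+ m = Complex (cos (pi * m%:R / n%:R)) (sin (pi * m%:R / n%:R)).
Proof.
elim: m => [|m IHm]; first by rewrite expr0 mulr0 mul0r cos0 sin0.
have -> : pi * m.+1%:R / n%:R = pi * m%:R / n%:R + pi / n%:R :> R.
  by rewrite -natr1 mulrDr mulr1 mulrDl.
by rewrite exprSr IHm cosD sinD; congr Complex; rewrite addrC.
Qed.

Lemma conj_zetaX m : (zeta ^+ m)^* = (zeta ^+ m)^-1.
Proof.
suff conj_zeta : zeta^* = zeta^-1 by rewrite rmorphXn /= conj_zeta exprVn.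
apply/esym/mulr1_eq; congr Complex => /=.
  by rewrite mulrN opprK -!expr2 cos2Dsin2.
by rewrite mulrN mulrC addNr.
Qed.

Hypothesis n_gt0 : (0 < n)%N.

Lemma zeta_double_order : zeta ^+ n.*2 = 1.
Proof.
rewrite zetaX -muln2 natrM mulrA mulrAC mulfK ?pnatr_eq0 -?lt0n // mulr_natr.
by rewrite cos2pi sin2pi.
Qed.

Lemma zetaX_neq1 m : (0 < m <= n)%N -> zeta ^+ m != 1.
Proof.
case/andP=> m_gt0 m_le; rewrite zetaX; apply/negP => /eqP[cos_eq1 _].
have n_pos : (0 : R) < n%:R by rewrite ltr0n.
have theta_gt0 : (0 : R) < pi * m%:R / n%:R.
  by rewrite !mulr_gt0 ?pi_gt0 ?ltr0n ?invr_gt0.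
have theta_le : (pi : R) * m%:R / n%:R <= pi.
  by rewrite ler_pdivrMr // ler_pM2l ?pi_gt0 ?ler_nat.
have : cos (pi * m%:R / n%:R) < cos (0 : R).
  by rewrite ltr_cos ?in_itv /= ?lexx ?(ltW theta_gt0) ?(ltW (pi_gt0 R)).
by rewrite cos_eq1 cos0 ltxx.
Qed.

Lemma zeta_primitive : (n.*2).-primitive_root zeta.
Proof.
have n2_gt0 : (0 < n.*2)%N by rewrite double_gt0.
have [m m_prim m_dvd] := prim_order_exists n2_gt0 zeta_double_order.
suff <- : m = n.*2 by [].
apply/eqP; apply: contraT => m_neq.
have [[|[|q]] Dq] := dvdnP m_dvd.
- by rewrite Dq in n2_gt0.
- by rewrite Dq mul1n eqxx in m_neq.
have m_le : (m <= n)%N.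
  by rewrite -leq_double Dq -muln2 [(q.+2 * m)%N]mulnC leq_mul2l ltnS orbT.
suff : zeta ^+ m != 1 by rewrite (prim_expr_order m_prim) eqxx.
by apply: zetaX_neq1; rewrite (prim_order_gt0 m_prim) m_le.
Qed.

End Zeta.

Lemma dic_mul_inv_fst n (g h : Dic n) : (dic_mul (dic_inv g) h).1 = (g.1 != h.1).
Proof. by case: g h => [[] a] [[] b]. Qed.

Lemma dic_mul_inv_same n (s : bool) (a b : 'Z_(n.*2)) :
  dic_mul (dic_inv (s, a)) (s, b) = (false, b - a).
Proof.
case: s; last by rewrite /= addrC.
by congr pair; rewrite /= [_ + b]addrC [a + _]addrC addrKA.
Qed.

Section DesignSums.
Variables (R : realType) (n : nat) (C : {set Dic n}).
Hypothesis n_gt0 : (0 < n)%N.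

Local Notation zeta := (zeta R n).
Local Notation Ex i g := (\sum_(h : Dic n) idemE R i g h * charvec R C h).

Lemma Ex_Chi3 g : Ex Chi3 g = (Ex Chi2 g)^*.
Proof.
rewrite rmorph_sum; apply: eq_bigr => h _.
have charvec_real : (charvec R C h)^* = charvec R C h.
  by rewrite /charvec; case: (h \in C); rewrite ?conjC1 ?conjC0.
by rewrite /idemE !rmorphM /= fmorphV /= conjC_nat charvec_real.
Qed.

Definition dic_psum (s : bool) (u : R[i]) : R[i] :=
  \sum_(h in C | h.1 == s) u ^+ val h.2.

Lemma dic_psum_conj s u : dic_psum s u^* = (dic_psum s u)^*.
Proof. by rewrite rmorph_sum; apply: eq_bigr => h _; rewrite rmorphXn. Qed.

Lemma Psi_xE r (k : 'Z_(n.*2)) :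
  dic_char R (Psi r) (false, k) = zeta ^+ r ^+ val k + (zeta ^+ r ^+ val k)^-1.
Proof.
rewrite -exprM -conj_zetaX zetaX /=.
by congr Complex; rewrite ?subrr // mulr_natl mulr2n.
Qed.

Lemma conj_Psi r (g : Dic n) : (dic_char R (Psi r) g)^* = dic_char R (Psi r) g.
Proof.
case: g => [[] k]; rewrite /= ?conjC0 //.
by apply/eqP; rewrite eq_complex /= oppr0 !eqxx.
Qed.

Lemma Ex_Psi r s (a : 'Z_(n.*2)) : let u := zeta ^+ r in
  Ex (Psi r) (s, a) = dic_char R (Psi r) (dic_one n) / #|{: Dic n}|%:R *
    ((u ^+ val a)^-1 * dic_psum s u + u ^+ val a * dic_psum s u^-1).
Proof.
move=> u; have u_order : u ^+ n.*2 = 1 by rewrite exprAC zeta_double_order ?expr1n.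
have n2_gt1 : (1 < n.*2)%N by rewrite -addnn -(addn1 1) leq_add.
set c := _ / _; rewrite mulrDr !mulr_sumr -big_split big_mkcondr big_mkcond.
apply: eq_bigr => h _; rewrite /charvec; case: (h \in C); last by rewrite mulr0.
rewrite mulr1; case: eqP => [h1 | /eqP h1]; last first.
  rewrite /idemE; suff -> : dic_char R (Psi r) (dic_mul (dic_inv (s, a)) h) = 0.
    by rewrite conjC0 mulr0.
  by rewrite /dic_char dic_mul_inv_fst eq_sym h1.
case: h h1 => t b /= ->; rewrite /idemE -/c dic_mul_inv_same -mulrDr; congr (_ * _).
rewrite conj_Psi Psi_xE -/u (expr_ZpB _ _ n2_gt1 u_order) invf_div.
by rewrite mulrC exprVn.
Qed.

Lemma dic_psum_eq0_exp_coprime s (w : R[i]) d k r :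
  d.-primitive_root w -> coprime k d ->
  (dic_psum s (w ^+ k ^+ r) == 0) = (dic_psum s (w ^+ r) == 0).
Proof.
move=> w_prim k_cop; pose P : {poly rat} := \sum_(h in C | h.1 == s) 'X^(val h.2).
have psumE v : (dic_psum s v == 0) = root (map_poly ratr P) v.
  rewrite /root rmorph_sum horner_sum; congr (_ == 0); apply: eq_bigr => h _.
  by rewrite /= map_polyXn hornerXn.
by rewrite !psumE (root_ratr_prim_exp_coprime _ _ w_prim k_cop).
Qed.

Lemma inT_PsiE r : ~~ (n %| r)%N ->
  inT R C (Psi r) <-> forall s, dic_psum s (zeta ^+ r) = 0.
Proof.
move=> r_ndvd; set u := zeta ^+ r.
have c_neq0 : dic_char R (Psi r) (dic_one n) / #|{: Dic n}|%:R != 0.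
  rewrite mulf_neq0 // ?invr_eq0 ?pnatr_eq0 -?lt0n.
    by rewrite /dic_one Psi_xE expr0 invr1 -mulr2n mulrn_eq0 oner_eq0.
  by apply/card_gt0P; exists (dic_one n).
have u_neq0 : u != 0.
  by rewrite expf_neq0 // (prim_root_eq0 (zeta_primitive R n_gt0)) -lt0n double_gt0.
have u_inv_neq : u^-1 != u.
  apply: contra r_ndvd => /eqP u_inv.
  have : u ^+ 2 == 1 by rewrite expr2 -{1}u_inv mulVf.
  rewrite -exprM -(prim_order_dvd (zeta_primitive R n_gt0)) -!muln2.
  by rewrite dvdn_pmul2r.
split=> [Psi_T s | psum0 [s a]]; last first.
  by rewrite Ex_Psi -conj_zetaX dic_psum_conj psum0 conjC0 !mulr0 addr0 mulr0.
have := Psi_T (s, 1); have := Psi_T (s, 0); rewrite !Ex_Psi.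
move=> /eqP; rewrite mulf_eq0 (negPf c_neq0) expr0 invr1 !mul1r addr_eq0 => /eqP E0.
move=> /eqP; rewrite mulf_eq0 (negPf c_neq0) /= E0 modn_small // expr1.
rewrite mulrN addrC -mulrBl mulf_eq0 subr_eq0 eq_sym (negPf u_inv_neq) /=.
by move=> /eqP ->; rewrite oppr0.
Qed.

Lemma inT_Psi_coprime k l : coprime k n.*2 -> ~~ (n %| l)%N ->
  inT R C (Psi l) <-> inT R C (Psi (k * l)).
Proof.
move=> k_cop l_ndvd; have kl_ndvd : ~~ (n %| k * l)%N.
  by rewrite Gauss_dvdr // coprime_sym (coprime_dvdr _ k_cop) // -muln2 dvdn_mulr.
have psum_eq s := dic_psum_eq0_exp_coprime s l (zeta_primitive R n_gt0) k_cop.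
rewrite !inT_PsiE // exprM.
by split=> psum0 s; apply/eqP; [rewrite psum_eq | rewrite -psum_eq]; apply/eqP.
Qed.

Lemma Psi_eq r r' : zeta ^+ r = zeta ^+ r' \/ zeta ^+ r * zeta ^+ r' = 1 ->
  @dic_char R n (Psi r) =1 dic_char R (Psi r').
Proof.
case=> [zeta_r | /mulr1_eq zeta_r] [[] k] //; rewrite !Psi_xE -zeta_r //.
by rewrite exprVn invrK addrC.
Qed.

Lemma inT_char_eq i j : @dic_char R n i =1 dic_char R j -> inT R C i <-> inT R C j.
Proof.
move=> ij; have E g : Ex i g = Ex j g by apply: eq_bigr => h _; rewrite /idemE !ij.
by split=> T g; [rewrite -E | rewrite E]; apply: T.
Qed.

End DesignSums.

Lemma abs_zMOD (z : int) (m : nat) : (0 < m)%N ->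
  `|zMOD z m|%N = `|(z %% m)%Z|%N \/ `|zMOD z m|%N = (m - `|(z %% m)%Z|)%N.
Proof.
move=> m_gt0; rewrite /zMOD; case: ifP => _; [left | right] => //.
have m_neq0 : m%:Z != 0 by rewrite eqz_nat -lt0n.
have [r Dr] : exists r : nat, (z %% m)%Z = r.
  by exists `|(z %% m)%Z|%N; rewrite gez0_abs // modz_ge0.
have : (z %% m < m)%Z by rewrite ltz_pmod // ltz_nat.
rewrite Dr ltz_nat => r_lt /=.
by rewrite distnEr // ltnW.
Qed.

Theorem corollary6p1 (R : realType) (n : nat) (C : {set Dic n}) :
  odd n -> C != set0 ->
  delsarte_design R C (inT R C) ->
  (inT R C Chi2 <-> inT R C Chi3) /\
  (forall (l : nat) (k : int),
      (1 <= l <= n.-1)%N -> - (n%:Z) < k < n%:Z -> gcdz k (n.*2)%:Z = 1%N ->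
      (inT R C (Psi l) <-> inT R C (Psi `|zMOD (k * l%:Z) n.*2|%N))).
Proof.
move=> /odd_gt0 n_gt0 _ _; split.
  by split=> T g; [rewrite Ex_Chi3 T conjC0 | apply/eqP; rewrite -conjC_eq0 -Ex_Chi3 T].
move=> l k /andP[l_gt0 l_lt] _ k_cop.
have n2_gt0 : (0 < n.*2)%N by rewrite double_gt0.
have n2_neq0 : n.*2%:Z != 0 by rewrite eqz_nat -lt0n.
have l_ndvd : ~~ (n %| l)%N by rewrite gtnNdvd // -(prednK n_gt0) ltnS.
pose K := `|(k %% n.*2)%Z|%N; pose rho := `|(k * l%:Z %% n.*2)%Z|%N.
have K_E : K%:Z = (k %% n.*2)%Z by rewrite gez0_abs // modz_ge0.
have K_cop : coprime K n.*2.
  by move: k_cop; rewrite -gcdz_modl -K_E /gcdz /coprime => -[] ->.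
have rho_lt : (rho < n.*2)%N by rewrite -ltz_nat gez0_abs ?modz_ge0 ?ltz_pmod ?ltz_nat.
have zeta_Kl : zeta R n ^+ (K * l) = zeta R n ^+ rho.
  have zeta_order := zeta_double_order R n_gt0.
  rewrite -(expr_mod _ zeta_order) -[in RHS](expr_mod _ zeta_order); congr (_ ^+ _).
  apply/eqP; rewrite -eqz_nat -!modz_nat PoszM K_E modzMml.
  by rewrite gez0_abs ?modz_ge0 // modz_mod.
rewrite (inT_Psi_coprime R C n_gt0 K_cop l_ndvd); apply: inT_char_eq; apply: Psi_eq.
have [-> | ->] := abs_zMOD (k * l%:Z) n2_gt0; [left | right] => //.
by rewrite zeta_Kl -exprD subnKC ?zeta_double_order // ltnW.
Qed.
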